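(* Let $\mathbb{QU}$ be the rational Urysohn space and let $\mathbf{A},\mathbf{B}\subset\mathbb{QU}$ be finite. Then $\mathrm{Iso}_{\mathbf{A}\cap\mathbf{B}}(\mathbb{QU})=\overline{\langle\mathrm{Iso}_{\mathbf{A}}(\mathbb{QU}),\mathrm{Iso}_{\mathbf{B}}(\mathbb{QU})\rangle}$.
   Context: The rational Urysohn space $\mathbb{QU}$ is the unique countable metric space with rational distances into which every finite metric space with rational distances embeds isometrically and in which every isometry between finite subsets extends to an isometry of $\mathbb{QU}$. Its isometry group carries the topology of pointwise convergence ($\mathbb{QU}$ taken discrete), and the closure is taken in this topology. For $\mathbf{D}\subseteq\mathbb{QU}$, $\mathrm{Iso}_{\mathbf{D}}(\mathbb{QU})$ is the subgroup of isometries fixing $\mathbf{D}$ pointwise; $\langle X,Y\rangle$ is the subgroup generated by $X\cup Y$. *)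

From HB Require Import structures.
From mathcomp Require Import all_boot all_order all_algebra.
Set Implicit Arguments. Unset Strict Implicit. Unset Printing Implicit Defensive.
Import Order.TTheory GRing.Theory Num.Theory.
Local Open Scope ring_scope.

Definition is_metric (T : Type) (d : T -> T -> rat) : Prop :=
  [/\ forall x y, 0 <= d x y,
      forall x y, d x y = 0 <-> x = y,
      forall x y, d x y = d y x &
      forall x y z, d x z <= d x y + d y z].

Definition is_isometry (T : Type) (d : T -> T -> rat) (g : T -> T) : Prop :=
  (forall x y, d (g x) (g y) = d x y) /\ bijective g.

Definition rat_universal (T : Type) (d : T -> T -> rat) : Prop :=
  forall (F : finType) (dF : F -> F -> rat), is_metric dF ->
    exists f : F -> T, forall x y, d (f x) (f y) = dF x y.

Definition ultrahomogeneous (T : eqType) (d : T -> T -> rat) : Prop :=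
  forall (A : seq T) (p : T -> T),
    (forall x y, x \in A -> y \in A -> d (p x) (p y) = d x y) ->
    exists g, is_isometry d g /\ forall x, x \in A -> g x = p x.

(* (T,d) is (isometric to) the rational Urysohn space QU. *)
Definition is_rational_Urysohn (T : countType) (d : T -> T -> rat) : Prop :=
  [/\ is_metric d, rat_universal d & ultrahomogeneous d].

Definition Iso_fix (T : Type) (d : T -> T -> rat) (D : T -> Prop) (g : T -> T)
  : Prop := is_isometry d g /\ forall x, D x -> g x = x.

Definition is_subgroup (T : Type) (d : T -> T -> rat) (H : (T -> T) -> Prop)
  : Prop :=
  [/\ forall g, H g -> is_isometry d g,
      H id,
      forall g h, H g -> H h -> H (g \o h) &
      forall g h, H g -> cancel g h -> cancel h g -> H h].

Definition generated (T : Type) (d : T -> T -> rat) (S : (T -> T) -> Prop)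
  (g : T -> T) : Prop :=
  forall H, is_subgroup d H -> (forall h, S h -> H h) -> H g.

(* Closure in Iso(T,d) for the topology of pointwise convergence (T discrete):
   g is in the closure of S iff every finite set of points is moved by g as by
   some element of S. *)
Definition iso_closure (T : eqType) (d : T -> T -> rat) (S : (T -> T) -> Prop)
  (g : T -> T) : Prop :=
  is_isometry d g /\
  forall F : seq T, exists h, S h /\ forall x, x \in F -> h x = g x.

(* Write C = A ∩ B.  The key point is that the orbit of x under the group
   G = <Iso_A, Iso_B> contains every point with the same distances to C as x:
   then an isometry fixing C can be approximated on any finite set by elements
   of G.  To join x to y, move both to the point z realizing the largest metric
   extension phi(p) = min(K, min_{c in C} d(x,c) + d(c,p)) of the distances to C
   (K a bound on all relevant distances).  Moving with Iso_A, one can realize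
   on B the largest extension of the distances to A, which only raises
   distances to B \ A; alternating with Iso_B, distances to points outside C
   increase by at least the minimal separation del of A ∪ B at each round
   until they reach phi, and the point finally agrees with phi on A. *)

From mathcomp Require Import all_boot all_order all_algebra.
Set Implicit Arguments. Unset Strict Implicit. Unset Printing Implicit Defensive.
Import Order.TTheory GRing.Theory Num.Theory.
Local Open Scope ring_scope.

Section Generated.
Variables (T : Type) (d : T -> T -> rat).
Implicit Types (S H : (T -> T) -> Prop) (g h : T -> T).

Lemma isometry_subgroup : is_subgroup d (is_isometry d).
Proof.
split=> //; first by split=> //; exists id.
- move=> g h [dg bg] [dh bh]; split; last exact: bij_comp.
  by move=> x y /=; rewrite dg dh.
- move=> g h [dg bg] gh hg; split; last by exists g.
  by move=> x y; rewrite -dg !hg.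
Qed.

Lemma Iso_fix_subgroup (D : T -> Prop) : is_subgroup d (Iso_fix d D).
Proof.
have [_ iso_id iso_comp iso_inv] := isometry_subgroup.
split=> [g [] //|//|g h [ig fg] [ih fh]|g h [ig fg] gh hg].
- split; first exact: iso_comp.
  by move=> x Dx /=; rewrite fh // fg.
- split; first exact: iso_inv gh hg.
  by move=> x Dx; rewrite -{1}(fg x Dx) gh.
Qed.

Lemma generated_subgroup S H g :
  is_subgroup d H -> (forall h, S h -> H h) -> generated d S g -> H g.
Proof. by move=> sH SH; apply. Qed.

Lemma generated_mono S S' g :
  (forall h, S h -> S' h) -> generated d S g -> generated d S' g.
Proof. by move=> SS' gS H sH S'H; apply: gS => // h /SS'; apply: S'H. Qed.

Lemma mem_generated S g : S g -> generated d S g.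
Proof. by move=> Sg H _; apply. Qed.

Lemma generated_id S : generated d S id.
Proof. by move=> H []. Qed.

Lemma generated_comp S g h :
  generated d S g -> generated d S h -> generated d S (g \o h).
Proof.
move=> Sg Sh H sH HS; case: (sH) => _ _ Hcomp _.
by apply: Hcomp; [apply: Sg | apply: Sh].
Qed.

Lemma generated_inv S g :
  (forall h, S h -> is_isometry d h) -> generated d S g ->
  exists h, [/\ generated d S h, cancel g h & cancel h g].
Proof.
move=> S_iso Sg; have [_ [h gh hg]] := generated_subgroup isometry_subgroup S_iso Sg.
exists h; split=> // H sH HS; case: (sH) => _ _ _ Hinv.
by apply: (Hinv g) => //; apply: Sg.
Qed.

Definition orbit_rel S (z z' : T) := exists k, generated d S k /\ k z = z'.

Lemma orbit_rel_refl S z : orbit_rel S z z.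
Proof. by exists id; split=> //; apply: generated_id. Qed.

Lemma orbit_rel_trans S z1 z2 z3 :
  orbit_rel S z1 z2 -> orbit_rel S z2 z3 -> orbit_rel S z1 z3.
Proof.
move=> [k1 [g1 e1]] [k2 [g2 e2]]; exists (k2 \o k1).
by split; [apply: generated_comp | rewrite /= e1].
Qed.

Lemma orbit_rel_sym S z1 z2 : (forall h, S h -> is_isometry d h) ->
  orbit_rel S z1 z2 -> orbit_rel S z2 z1.
Proof.
move=> S_iso [k [gk <-]]; have [h [gh kh _]] := generated_inv S_iso gk.
by exists h.
Qed.

End Generated.

Lemma bigmin_attained (disp : Order.disp_t) (R : orderType disp) (I : eqType)
    (s : seq I) (x : R) (F : I -> R) :
  \big[Order.min/x]_(i <- s) F i = x \/
  exists2 i, i \in s & \big[Order.min/x]_(i <- s) F i = F i.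
Proof.
rewrite big_seq; elim/big_ind: _ => [|m1 m2 h1 h2|i si]; [by left| |by right; exists i].
by rewrite minEle; case: ifP.
Qed.

Section Urysohn.
Variables (T : countType) (d : T -> T -> rat).
Hypotheses (metric_d : is_metric d) (universal : rat_universal d)
  (homog : ultrahomogeneous d).

Lemma dist_ge0 x y : 0 <= d x y.
Proof. by case: metric_d. Qed.

Lemma dist0 x : d x x = 0.
Proof. by case: metric_d => _ d_eq0 _ _; apply/d_eq0. Qed.

Lemma dist_eq0 x y : d x y = 0 -> x = y.
Proof. by case: metric_d => _ d_eq0 _ _; apply: (proj1 (d_eq0 x y)). Qed.

Lemma distC x y : d x y = d y x.
Proof. by case: metric_d. Qed.

Lemma dist_triangle x y z : d x z <= d x y + d y z.
Proof. by case: metric_d. Qed.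

Lemma finite_diameter (D : seq T) :
  exists2 K, 0 <= K & forall p q, p \in D -> q \in D -> d p q <= K.
Proof.
exists (\big[Num.max/0]_(p <- D) \big[Num.max/0]_(q <- D) d p q).
  by rewrite bigmax_ge_id.
move=> p q pD qD; apply: (bigmax_sup_seq _ _ _ _ _ pD) => //.
exact: (le_bigmax_seq _ _ _ _ qD).
Qed.

Lemma finite_separation (D : seq T) :
  exists2 del, 0 < del & forall p q, p \in D -> q \in D -> p != q -> del <= d p q.
Proof.
exists (\big[Num.min/1]_(p <- D) \big[Num.min/1]_(q <- D | q != p) d p q).
  rewrite big_seq lt_bigmin // => p _; rewrite big_seq_cond lt_bigmin // => q.
  case/andP=> _ qp; rewrite lt_def dist_ge0 andbT.
  by apply: contra qp => /eqP/dist_eq0 ->.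
move=> p q pD qD pq; apply: (bigmin_inf_seq _ _ _ _ _ pD) => //.
by apply: (ge_bigmin_seq _ _ _ _ qD); rewrite eq_sym.
Qed.

(* Truncation at K makes the infimum meaningful when X is empty. *)
Definition inf_conv (X : seq T) (f : T -> rat) (K : rat) (p : T) : rat :=
  \big[Num.min/K]_(a <- X) (f a + d a p).

Lemma inf_conv_le_bound X f K p : inf_conv X f K p <= K.
Proof. exact: bigmin_le_id. Qed.

Lemma inf_conv_le X f K p a : a \in X -> inf_conv X f K p <= f a + d a p.
Proof. by move=> aX; apply: (ge_bigmin_seq _ _ _ _ aX). Qed.

Lemma le_inf_conv X f K p m :
  m <= K -> (forall a, a \in X -> m <= f a + d a p) -> m <= inf_conv X f K p.
Proof. by move=> mK mX; rewrite /inf_conv big_seq le_bigmin. Qed.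

Lemma inf_conv_attained X f K p :
  inf_conv X f K p = K \/ exists2 a, a \in X & inf_conv X f K p = f a + d a p.
Proof. exact: bigmin_attained. Qed.

Lemma inf_conv_lipschitz X f K p q :
  inf_conv X f K q <= inf_conv X f K p + d p q.
Proof.
case: (inf_conv_attained X f K p) => [->|[a aX ->]].
  by apply: le_trans (inf_conv_le_bound _ _ _ _) _; rewrite lerDl dist_ge0.
by apply: le_trans (inf_conv_le _ _ _ aX) _; rewrite -addrA lerD2l dist_triangle.
Qed.

Lemma inf_conv_dist_mem X z K a : a \in X -> d z a <= K -> inf_conv X (d z) K a = d z a.
Proof.
move=> aX zaK; apply/le_anti; rewrite le_inf_conv //; last first.
  by move=> b _; apply: dist_triangle.
by rewrite (le_trans (inf_conv_le _ _ _ aX)) // dist0 addr0.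
Qed.

Lemma inf_conv_dist_triangle X z K p q : 0 <= K -> d p q <= K ->
  d p q <= inf_conv X (d z) K p + inf_conv X (d z) K q.
Proof.
move=> K0 pqK.
case: (inf_conv_attained X (d z) K p) => [->|[a aX ->]].
  by rewrite ler_wpDr // le_inf_conv // => *; rewrite addr_ge0 ?dist_ge0.
case: (inf_conv_attained X (d z) K q) => [->|[b bX ->]].
  by rewrite ler_wpDl // addr_ge0 ?dist_ge0.
apply: le_trans (dist_triangle p z q) _; apply: lerD; last exact: dist_triangle.
by rewrite addrC (distC z a) (distC a p) dist_triangle.
Qed.

Section Katetov.
Variables (D : seq T) (u : T -> rat).
Hypotheses (u_lipschitz : forall p q, p \in D -> q \in D -> u p <= u q + d p q)
  (u_triangle : forall p q, p \in D -> q \in D -> d p q <= u p + u q).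

Definition one_point_ext (a b : option (seq_sub D)) : rat :=
  match a, b with
  | None, None => 0
  | None, Some j | Some j, None => u (ssval j)
  | Some i, Some j => d (ssval i) (ssval j)
  end.

Lemma one_point_ext_metric :
  (forall p, p \in D -> 0 < u p) -> is_metric one_point_ext.
Proof.
move=> u_gt0; have u_ge0 p : p \in D -> 0 <= u p by move/u_gt0/ltW.
split.
- by case=> [i|] [j|] //=; rewrite ?dist_ge0 ?u_ge0 ?ssvalP.
- case=> [i|] [j|] //=; split=> //.
  + by move/dist_eq0 => eq_ij; congr Some; apply: val_inj.
  + by case=> ->; rewrite dist0.
  + by move=> u0; move: (u_gt0 _ (ssvalP i)); rewrite u0 ltxx.
  + by move=> u0; move: (u_gt0 _ (ssvalP j)); rewrite u0 ltxx.
- by case=> [i|] [j|] //=; rewrite distC.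
- case=> [i|] [j|] [k|] //=; rewrite ?addr0 ?add0r ?lexx ?u_ge0 ?ssvalP //;
  first [ exact: dist_triangle
        | by rewrite addrC; apply: u_lipschitz; apply: ssvalP
        | by rewrite distC; apply: u_lipschitz; apply: ssvalP
        | exact: u_triangle (ssvalP _) (ssvalP _)
        | by rewrite addr_ge0 ?u_ge0 ?ssvalP ].
Qed.

(* If u vanishes at some p then p realizes u; otherwise embed the one-point
   extension of D by universality and move its copy of D back onto D. *)
Lemma katetov_realized :
  (forall p, p \in D -> 0 <= u p) -> exists z, forall p, p \in D -> d z p = u p.
Proof.
move=> u_ge0; case: (boolP (has (fun p => u p == 0) D)) => [/hasP [p pD /eqP up0]|].
  exists p => q qD; apply/le_anti/andP; split.
    by have := u_triangle pD qD; rewrite up0 add0r.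
  by have := u_lipschitz qD pD; rewrite up0 add0r distC.
move/hasPn => u_neq0.
have u_gt0 p : p \in D -> 0 < u p by move=> pD; rewrite lt_def u_neq0 ?u_ge0.
have [f f_iso] := universal (one_point_ext_metric u_gt0).
pose back (t : T) := if [pick i | f (Some i) == t] is Some i then ssval i else t.
have backK i : back (f (Some i)) = ssval i.
  rewrite /back; case: pickP => [j /eqP fj|/(_ i)]; last by rewrite eqxx.
  by apply: dist_eq0; rewrite -[d _ _]/(one_point_ext (Some j) (Some i)) -f_iso fj dist0.
pose L := [seq f (Some i) | i <- enum {: seq_sub D}].
have [g [[g_iso _] g_back]] :
    exists g, is_isometry d g /\ forall x, x \in L -> g x = back x.
  by apply: homog => _ _ /mapP [i _ ->] /mapP [j _ ->]; rewrite !backK f_iso.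
exists (g (f None)) => q qD.
have gq : g (f (Some (SeqSub qD))) = q by rewrite g_back ?backK // map_f ?mem_enum.
by rewrite -{1}gq g_iso f_iso.
Qed.

End Katetov.

Lemma Iso_fix_move (D : seq T) z z' :
  (forall a, a \in D -> d z' a = d z a) ->
  exists h, Iso_fix d (fun a => a \in D) h /\ h z = z'.
Proof.
move=> zz'D; pose p (t : T) := if t == z then z' else t.
have [g [g_iso g_p]] : exists g, is_isometry d g /\ forall x, x \in z :: D -> g x = p x.
  apply: homog => x y; rewrite !inE /p.
  case: (eqVneq x z) => [->|xz]; case: (eqVneq y z) => [->|yz] //=.
  - by rewrite !dist0.
  - by move=> _ yD; apply: zz'D.
  - by move=> xD _; rewrite distC zz'D // distC.
exists g; split; last by rewrite g_p ?mem_head // /p eqxx.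
split=> // a aD; rewrite g_p ?inE ?aD ?orbT // /p.
by case: (eqVneq a z) => // az; subst a; apply: dist_eq0; rewrite zz'D // dist0.
Qed.

Lemma inf_conv_realized (X D : seq T) z K : 0 <= K ->
  (forall p q, p \in D -> q \in D -> d p q <= K) ->
  exists z', forall p, p \in D -> d z' p = inf_conv X (d z) K p.
Proof.
move=> K0 diam_D; apply: katetov_realized => //.
- by move=> p q _ _; rewrite distC inf_conv_lipschitz.
- by move=> p q pD qD; apply: inf_conv_dist_triangle => //; apply: diam_D.
- by move=> p _; apply: le_inf_conv => // a _; rewrite addr_ge0 ?dist_ge0.
Qed.

Definition fix_either (A B : seq T) (h : T -> T) :=
  Iso_fix d (fun x => x \in A) h \/ Iso_fix d (fun x => x \in B) h.

Lemma fix_either_isometry A B h : fix_either A B h -> is_isometry d h.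
Proof. by case=> -[]. Qed.

Lemma orbit_rel_Iso_fix (S : (T -> T) -> Prop) (X : seq T) z z' :
  (forall h, Iso_fix d (fun x => x \in X) h -> S h) ->
  (forall a, a \in X -> d z' a = d z a) -> orbit_rel d S z z'.
Proof.
move=> XS zz'X; have [h [h_fix <-]] := Iso_fix_move zz'X.
by exists h; split=> //; apply: mem_generated; apply: XS.
Qed.

Section Profile.
Variables (C D : seq T) (r : T -> rat) (K del : rat).
Hypotheses (K_ge0 : 0 <= K) (diam_D : forall p q, p \in D -> q \in D -> d p q <= K)
  (del_gt0 : 0 < del) (sep_D : forall p q, p \in D -> q \in D -> p != q -> del <= d p q).

Local Notation phi := (inf_conv C r K).

Definition below_profile z :=
  (forall c, c \in C -> d z c = r c) /\ (forall p, p \in D -> d z p <= phi p).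

Definition profile_lbound (X Y : seq T) z t :=
  forall p, p \in X -> p \notin Y -> Num.min (phi p) t <= d z p.

Lemma profile_lbound_le X Y z t t' :
  t' <= t -> profile_lbound X Y z t -> profile_lbound X Y z t'.
Proof.
by move=> t't lb p pX pY; apply: le_trans (lb p pX pY); rewrite le_min2.
Qed.

(* Fixing X, push z as far as possible from Y: the distances to Y \ X then grow
   by del, or reach phi, thanks to the separation of the points of D. *)
Lemma profile_step X Y z t :
  {subset X <= D} -> {subset Y <= D} -> (forall c, (c \in C) = (c \in X) && (c \in Y)) ->
  below_profile z -> profile_lbound X Y z t ->
  exists z', [/\ forall a, a \in X -> d z' a = d z a,
                 below_profile z' & profile_lbound Y X z' (t + del)].
Proof.
move=> XD YD CXY [zC zD] lb.
have [z' z'D] := inf_conv_realized X z K_ge0 diam_D.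
have z'X a : a \in X -> d z' a = d z a.
  move=> aX; rewrite z'D ?XD // inf_conv_dist_mem //.
  exact: le_trans (zD a (XD a aX)) (inf_conv_le_bound _ _ _ _).
have CX c : c \in C -> c \in X by rewrite CXY => /andP [].
exists z'; split=> //; first split.
- by move=> c cC; rewrite z'X ?CX ?zC.
- move=> p pD; rewrite z'D // le_inf_conv ?inf_conv_le_bound // => c cC.
  by rewrite -zC // inf_conv_le ?CX.
move=> p pY pX; rewrite z'D ?YD // le_inf_conv ?ge_min ?inf_conv_le_bound // => a aX.
case: (boolP (a \in Y)) => aY.
  by rewrite zC ?CXY ?aX // ge_min inf_conv_le ?CXY ?aX.
have dap : del <= d a p.
  by apply: sep_D; [exact: XD | exact: YD | apply: contraNneq aY => ->].
have := lb a aX aY; rewrite ge_min => /orP [phi_a|t_a].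
  by rewrite ge_min (le_trans (inf_conv_lipschitz C r K a p)) ?lerD2r.
by rewrite ge_min lerD ?orbT.
Qed.

Lemma profile_reached A B x :
  {subset A <= D} -> {subset B <= D} -> (forall c, (c \in C) = (c \in A) && (c \in B)) ->
  (forall c, c \in C -> d x c = r c) -> (forall p, p \in D -> d x p <= K) ->
  exists z, orbit_rel d (fix_either A B) x z /\ forall p, p \in A -> d z p = phi p.
Proof.
move=> AD BD CAB xC xK.
have CBA c : (c \in C) = (c \in B) && (c \in A) by rewrite andbC.
have rounds n : exists z, [/\ orbit_rel d (fix_either A B) x z, below_profile z &
                              profile_lbound A B z (n%:R * del)].
  elim: n => [|n [z [xz zbelow zlb]]].
    exists x; split; first exact: orbit_rel_refl.
      split=> // p pD; rewrite le_inf_conv ?xK // => c cC.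
      by rewrite -xC // dist_triangle.
    by move=> p _ _; rewrite mul0r ge_min dist_ge0 orbT.
  have [z1 [zz1 z1below z1lb]] := profile_step AD BD CAB zbelow zlb.
  have [z2 [z1z2 z2below z2lb]] := profile_step BD AD CBA z1below z1lb.
  exists z2; split=> //.
    apply: orbit_rel_trans xz (orbit_rel_trans _ _).
      by apply: orbit_rel_Iso_fix zz1 => h; left.
    by apply: orbit_rel_Iso_fix z1z2 => h; right.
  apply: profile_lbound_le z2lb.
  by rewrite -natr1 mulrDl mul1r lerDl ltW.
have [n Kn] : exists n : nat, K <= n%:R * del.
  exists (Num.bound (K / del)); rewrite -ler_pdivrMr //.
  by apply/ltW/archi_boundP; rewrite divr_ge0 // ltW.
have [z [xz [zC zD] zlb]] := rounds n.
exists z; split=> // p pA; apply/le_anti; rewrite zD ?AD //=.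
case: (boolP (p \in B)) => pB.
  have pC : p \in C by rewrite CAB pA.
  by rewrite zC // (le_trans (inf_conv_le _ _ _ pC)) // dist0 addr0.
have := zlb p pA pB; rewrite ge_min => /orP [//|tn].
exact: le_trans (inf_conv_le_bound _ _ _ _) (le_trans Kn tn).
Qed.

End Profile.

Lemma Iso_fix_common_orbit (A B : seq T) g x :
  Iso_fix d (fun x => x \in A /\ x \in B) g -> orbit_rel d (fix_either A B) x (g x).
Proof.
move=> [[g_iso _] g_fix]; set y := g x.
pose D := A ++ B; pose C := [seq c <- A | c \in B].
have [K K_ge0 diam] := finite_diameter (x :: y :: D).
have [del del_gt0 sep_D] := finite_separation D.
have diam_D p q : p \in D -> q \in D -> d p q <= K.
  by move=> pD qD; apply: diam; rewrite !inE ?pD ?qD ?orbT.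
have xK p : p \in D -> d x p <= K by move=> pD; apply: diam; rewrite !inE ?pD ?eqxx ?orbT.
have yK p : p \in D -> d y p <= K by move=> pD; apply: diam; rewrite !inE ?pD ?eqxx ?orbT.
have AD : {subset A <= D} by move=> a aA; rewrite mem_cat aA.
have BD : {subset B <= D} by move=> b bB; rewrite mem_cat bB orbT.
have CAB c : (c \in C) = (c \in A) && (c \in B) by rewrite mem_filter andbC.
have yC c : c \in C -> d y c = d x c.
  by rewrite CAB => /andP [cA cB]; rewrite -{1}(g_fix c (conj cA cB)) g_iso.
have [zx [x_zx zxA]] := profile_reached K_ge0 diam_D del_gt0 sep_D AD BD CAB
  (x := x) (fun _ _ => erefl) xK.
have [zy [y_zy zyA]] := profile_reached K_ge0 diam_D del_gt0 sep_D AD BD CAB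
  yC yK.
have zy_y := orbit_rel_sym (@fix_either_isometry A B) y_zy.
apply: orbit_rel_trans x_zx (orbit_rel_trans _ zy_y).
by apply: (orbit_rel_Iso_fix (X := A)) => [h|a aA]; [left | rewrite zxA ?zyA].
Qed.

Lemma generated_fix_either (A B : seq T) h : generated d (fix_either A B) h ->
  Iso_fix d (fun x => x \in A /\ x \in B) h.
Proof.
apply: generated_subgroup; first exact: Iso_fix_subgroup.
by move=> k [] [k_iso k_fix]; split=> // x [xA xB]; apply: k_fix.
Qed.

(* Induction on F: after correcting g on F by an element h0 of the group, the
   isometry h0^-1 g fixes F as well, so the one-point case applies with F added
   to both A and B. *)
Lemma Iso_fix_common_approx (A B : seq T) g (F : seq T) :
  Iso_fix d (fun x => x \in A /\ x \in B) g ->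
  exists h, generated d (fix_either A B) h /\ forall x, x \in F -> h x = g x.
Proof.
move=> g_fix; elim: F => [|x F [h0 [h0_gen h0F]]].
  by exists id; split=> //; apply: generated_id.
have [h0i [h0i_gen h0K h0iK]] := generated_inv (@fix_either_isometry A B) h0_gen.
have [h0i_iso h0i_fix] := generated_fix_either h0i_gen.
have h0ig_fix : Iso_fix d (fun x => x \in A ++ F /\ x \in B ++ F) (h0i \o g).
  case: g_fix => g_iso gAB; split; first by case: (isometry_subgroup d) => _ _ + _; apply.
  move=> c []; rewrite !mem_cat; case: (boolP (c \in F)) => cF.
    by rewrite /= -h0F ?h0K.
  by rewrite !orbF => cA cB /=; rewrite gAB ?h0i_fix.
have [k [k_gen kx]] := Iso_fix_common_orbit x h0ig_fix.
have [_ kF] : Iso_fix d (fun y => y \in F) k.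
  apply: generated_subgroup (Iso_fix_subgroup d _) _ k_gen.
  by move=> h [] [h_iso h_fix]; split=> // z zF; apply: h_fix; rewrite mem_cat zF orbT.
exists (h0 \o k); split.
  apply: generated_comp h0_gen (generated_mono _ k_gen).
  move=> h [] [h_iso h_fix]; [left | right]; split=> // y yX;
  by apply: h_fix; rewrite mem_cat yX.
by move=> y; rewrite inE => /predU1P [->|yF] /=; rewrite ?kx ?h0iK // kF ?h0F.
Qed.

End Urysohn.

Theorem corollary4p17 (T : countType) (d : T -> T -> rat)
  (hU : is_rational_Urysohn d) (A B : seq T) :
  forall g : T -> T,
    Iso_fix d (fun x => x \in A /\ x \in B) g <->
    iso_closure d (generated d (fun h => Iso_fix d (fun x => x \in A) h \/
                                      Iso_fix d (fun x => x \in B) h)) g.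
Proof.
have [metric_d universal homog] := hU.
move=> g; split=> [g_fix | [g_iso g_approx]].
  split; first by case: g_fix.
  by move=> F; apply: Iso_fix_common_approx.
split=> // x [xA xB]; have [h [h_gen hx]] := g_approx [:: x].
have [_ h_fix] := generated_fix_either h_gen.
by rewrite -hx ?mem_head // h_fix.
Qed.
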